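(* There exists a fragile graph containing no cycle of length $4$ and having chromatic number $4$.
   Context: All graphs are finite and simple. A graph is $k$-connected if it has at least $k+1$ vertices and no vertex cutset with at most $k-1$ vertices. A graph is fragile if it has no $3$-connected subgraph. *)

From mathcomp Require Import all_boot.
Set Implicit Arguments. Unset Strict Implicit. Unset Printing Implicit Defensive.

Section Graphs.
Variable T : finType.

Definition simple_graph (e : rel T) : Prop :=
  (forall x y, e x y = e y x) /\ (forall x, ~~ e x x).

Definition is_subgraph (e : rel T) (S : {set T}) (f : rel T) : Prop :=
  simple_graph f /\ (forall x y, f x y -> [&& x \in S, y \in S & e x y]).

Definition restr (f : rel T) (R : {set T}) : rel T :=
  [rel x y | [&& f x y, x \in R & y \in R]].

Definition connected_on (f : rel T) (R : {set T}) : Prop :=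
  forall x y, x \in R -> y \in R -> connect (restr f R) x y.

Definition k_connected (k : nat) (S : {set T}) (f : rel T) : Prop :=
  k < #|S| /\
  forall C : {set T}, C \subset S -> #|C| < k -> connected_on f (S :\: C).

Definition fragile (e : rel T) : Prop :=
  ~ exists (S : {set T}) (f : rel T), is_subgraph e S f /\ k_connected 3 S f.

Definition has_C4 (e : rel T) : Prop :=
  exists a b c d : T,
    uniq [:: a; b; c; d] /\ [&& e a b, e b c, e c d & e d a].

Definition colorable (e : rel T) (k : nat) : Prop :=
  exists col : T -> 'I_k, forall x y, e x y -> col x != col y.

Definition chromatic_number_is (e : rel T) (k : nat) : Prop :=
  colorable e k /\ forall j, j < k -> ~ colorable e j.

End Graphs.

From mathcomp Require Import all_boot.
Set Implicit Arguments. Unset Strict Implicit. Unset Printing Implicit Defensive.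

(* The graph consists of two copies of a 10-vertex C4-free gadget in which
   every proper 3-colouring gives the vertices 7 and 9 the same colour.  The
   copies are glued so that, along the chain 7 - 9 - 18, both copies force
   equal colours, and the extra edge 7 18 then rules out any 3-colouring.
   Fragility: a 3-connected subgraph has minimum degree 3, so it survives the
   pruning of vertices of degree < 3; it cannot cross the 2-vertex separator
   {5, 7}, and pruning either side of that separator leaves nothing. *)

Fixpoint ords n : seq 'I_n :=
  if n is n'.+1 then ord0 :: map (lift ord0) (ords n') else [::].

(* [enum 'I_n] does not reduce by computation (it goes through [insub]);
   [ords n] is a reducible copy of it, used to run the finite checks below.
   These checks short-circuit with [if] rather than [&&] or [||], because
   [vm_compute] evaluates the arguments of [andb] and [orb] eagerly. *)
Lemma ordsE n : ords n = enum 'I_n.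
Proof. by elim: n => [|n IHn] /=; rewrite ?enum_ord0 // enum_ordSl IHn. Qed.

Lemma forall_enum (T : finType) (P : pred T) : all P (enum T) -> forall x, P x.
Proof. by move=> /allP P_all x; rewrite P_all ?mem_enum. Qed.

Lemma forall2_enum (T : finType) (r : rel T) :
  allrel r (enum T) (enum T) -> forall x y, r x y.
Proof. by move=> /allrelP r_all x y; rewrite r_all ?mem_enum. Qed.

Section Connectivity.
Variables (T : finType) (e : rel T).

Lemma card_le_size (A : {set T}) (s : seq T) : {subset A <= s} -> #|A| <= size s.
Proof. by move=> sAs; apply: leq_trans (card_size s); apply/subset_leq_card/subsetP. Qed.

Lemma k_connected_induced k S f :
  is_subgraph e S f -> k_connected k S f -> k_connected k S e.
Proof.
move=> [_ fe] [ltkS conn]; split=> // C sCS ltCk x y Sx Sy.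
apply: connect_sub (conn C sCS ltCk x y Sx Sy) => u v /and3P[fuv Ru Rv].
by apply: connect1; rewrite /restr /= Ru Rv !andbT; case/and3P: (fe u v fuv).
Qed.

Lemma k_connected_separation k S (A : {pred T}) (C : seq T) :
  k_connected k S e -> size C < k ->
  {in [predC C] &, forall x y, e x y -> (x \in A) = (y \in A)} ->
  {subset S <= [predU A & C]} \/ {subset S <= [predU [predC A] & C]}.
Proof.
move=> [_ conn] ltCk closedA.
have [/subsetP sub | /subsetPn[y Sy]] := boolP (S \subset [predU A & C]); first by left.
rewrite !inE negb_or => /andP[yA yC]; right=> x Sx; rewrite !inE.
case xC: (x \in C); rewrite ?orbT // orbF; apply/negP => xA.
pose D := [set z in S | z \in C].
have sDS : D \subset S by apply/subsetP => z; rewrite inE => /andP[].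
have ltDk : #|D| < k.
  by apply: leq_ltn_trans ltCk; apply: card_le_size => z; rewrite inE => /andP[].
have closedA_SD : closed (restr e (S :\: D)) A.
  move=> u v /and3P[euv]; rewrite !inE => /andP[uD uS] /andP[vD vS].
  by apply: closedA euv; rewrite inE /=; [move: uD | move: vD]; rewrite ?uS ?vS.
have xSD : x \in S :\: D by rewrite !inE Sx xC.
have ySD : y \in S :\: D by rewrite !inE Sy (negbTE yC).
by rewrite -(closed_connect closedA_SD (conn D sDS ltDk x y xSD ySD)) xA in yA.
Qed.

Hypothesis e_irr : forall x, ~~ e x x.

Lemma k_connected_degree k S x :
  k_connected k S e -> x \in S -> k <= #|[set y in S | e x y]|.
Proof.
move=> [ltkS conn] Sx; rewrite leqNgt; apply/negP => ltNk.
set N := [set y in S | e x y] in ltNk.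
have sNS : N \subset S by apply/subsetP => y; rewrite inE => /andP[].
have xSN : x \in S :\: N by rewrite !inE Sx e_irr.
have [y ySN nyx] : exists2 y, y \in S :\: N & y != x.
  have : 1 < #|S :\: N|.
    by rewrite cardsD (setIidPr sNS) ltn_subRL addn1 (leq_ltn_trans ltNk ltkS).
  case/card_gt1P => y1 [y2 [SNy1 SNy2 ne12]].
  by case: (eqVneq y1 x) => [eq1x | ]; [exists y2; rewrite // -eq1x eq_sym | exists y1].
have /connectP[[|z p] /= xp yp] := conn N sNS ltNk x y xSN ySN.
  by rewrite yp eqxx in nyx.
by case/andP: xp => /and3P[exz _]; rewrite !inE exz andbT andNb.
Qed.

Definition prune k (s : seq T) := [seq x <- s | k <= count (e x) s].

Definition core k (s : seq T) := iter (size s) (prune k) s.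

Lemma k_connected_sub_core k S s :
  k_connected k S e -> {subset S <= s} -> {subset S <= core k s}.
Proof.
move=> conn; rewrite /core; elim: (size s) => //= n IHn sSs x Sx.
rewrite mem_filter (IHn sSs x Sx) andbT -size_filter.
apply: leq_trans (k_connected_degree conn Sx) (card_le_size _) => y.
by rewrite inE mem_filter => /andP[Sy ->]; rewrite IHn.
Qed.

Lemma k_connected_core_size k S s :
  k_connected k S e -> {subset S <= s} -> k < size (core k s).
Proof.
move=> conn sSs; apply: (leq_trans _ (card_le_size (k_connected_sub_core conn sSs))).
by case: conn.
Qed.

Lemma not_k_connected_of_separation k S (A : {pred T}) (C : seq T) :
  size C < k ->
  {in [predC C] &, forall x y, e x y -> (x \in A) = (y \in A)} ->
  size (core k [seq x <- enum T | x \in [predU A & C]]) <= k ->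
  size (core k [seq x <- enum T | x \in [predU [predC A] & C]]) <= k ->
  ~ k_connected k S e.
Proof.
move=> ltCk closedA coreA coreB conn.
have sub_enum (B : {pred T}) : {subset S <= B} -> {subset S <= [seq x <- enum T | x \in B]}.
  by move=> sSB x /sSB; rewrite mem_filter mem_enum andbT.
have [/sub_enum sSA | /sub_enum sSB] := k_connected_separation conn ltCk closedA.
  by have := k_connected_core_size conn sSA; rewrite ltnNge coreA.
by have := k_connected_core_size conn sSB; rewrite ltnNge coreB.
Qed.

End Connectivity.

Section Coloring.
Variables (T : finType) (e : rel T).

Lemma colorable_widen j k : j <= k -> colorable e j -> colorable e k.
Proof.
move=> le_jk [col col_ok]; exists (widen_ord le_jk \o col) => x y /col_ok.
by apply: contra => /eqP/(congr1 val) /= eq_col; apply/eqP/val_inj.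
Qed.

Fixpoint no_proper_extension k (todo : seq T) (fixed : seq (T * 'I_k)) : bool :=
  if todo is x :: todo' then
    all (fun a => if has (fun p => if p.2 == a then e x p.1 else false) fixed
                  then true else no_proper_extension todo' ((x, a) :: fixed))
      (ords k)
  else false.

Lemma no_proper_extension_sound k (col : T -> 'I_k) :
  (forall x y, e x y -> col x != col y) ->
  forall todo fixed, ~~ no_proper_extension todo [seq (x, col x) | x <- fixed].
Proof.
move=> col_ok; elim=> [|x todo IH] fixed //=.
apply/allPn; exists (col x); first by rewrite ordsE mem_enum.
rewrite (negbTE (IH (x :: fixed))); case: hasP => // -[_ /mapP[y _ ->]] /=.
by case: eqP => // eq_col /col_ok; rewrite eq_col eqxx.
Qed.

Lemma not_colorable k :
  no_proper_extension (enum T) ([::] : seq (T * 'I_k)) -> ~ colorable e k.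
Proof.
move=> no_col [col col_ok].
by have := no_proper_extension_sound col_ok (enum T) [::]; rewrite no_col.
Qed.

End Coloring.

Section FourCycles.
Variables (T : finType) (e : rel T).

Definition has_C4b : bool :=
  has (fun a => has (fun b => if e a b then has (fun c => if e b c then
    has (fun d => [&& e c d, e d a & uniq [:: a; b; c; d]])
      (enum T) else false) (enum T) else false) (enum T)) (enum T).

Lemma has_C4P : reflect (has_C4 e) has_C4b.
Proof.
apply: (iffP idP) => [|[a [b [c [d [uniq_abcd /and4P[eab ebc ecd eda]]]]]]].
  case/hasP=> a _ /hasP[b _]; case: ifP => // eab /hasP[c _].
  case: ifP => // ebc /hasP[d _ /and3P[ecd eda uniq_abcd]].
  by exists a, b, c, d; rewrite uniq_abcd eab ebc ecd eda.
apply/hasP; exists a; rewrite ?mem_enum //; apply/hasP; exists b; rewrite ?mem_enum // eab.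
apply/hasP; exists c; rewrite ?mem_enum // ebc; apply/hasP; exists d; rewrite ?mem_enum //.
by rewrite ecd eda uniq_abcd.
Qed.

End FourCycles.

Definition gadget : seq (nat * nat) :=
  [:: (0, 1); (0, 2); (0, 3); (1, 2); (1, 7); (2, 5); (3, 4); (3, 6); (4, 5);
      (4, 6); (5, 8); (5, 9); (6, 7); (7, 8); (8, 9)].

(* The second copy of the gadget has its vertices 7 and 9 renamed 9 and 18. *)
Definition second_copy (i : nat) : nat :=
  nth 0 [:: 10; 11; 12; 13; 14; 15; 16; 9; 17; 18] i.

Definition edges : seq (nat * nat) :=
  (7, 18) :: gadget ++ [seq (second_copy p.1, second_copy p.2) | p <- gadget].

Definition G : rel 'I_19 :=
  fun x y => ((val x, val y) \in edges) || ((val y, val x) \in edges).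

Lemma G_simple : simple_graph G.
Proof.
split=> [x y | ]; first by rewrite /G orbC.
by apply: forall_enum; rewrite -ordsE; vm_compute.
Qed.

Definition G_coloring (x : 'I_19) : 'I_4 :=
  nth ord0 (ords 4) (nth 0 [:: 0; 1; 2; 1; 0; 1; 2; 0; 2; 0; 0; 1; 2; 1; 0; 1; 2; 2; 3] x).

Lemma G_colorable4 : colorable G 4.
Proof.
exists G_coloring => x y; apply/implyP; move: x y.
by apply: forall2_enum; rewrite -ordsE; vm_compute.
Qed.

Lemma G_not_colorable3 : ~ colorable G 3.
Proof. by apply: not_colorable; rewrite -ordsE; vm_compute. Qed.

Lemma G_no_C4 : ~ has_C4 G.
Proof. by apply/has_C4P; rewrite /has_C4b -ordsE; vm_compute. Qed.

Definition side : {pred 'I_19} := [pred x : 'I_19 | x < 8].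

Definition separator : seq 'I_19 :=
  [:: Ordinal (isT : 5 < 19); Ordinal (isT : 7 < 19)].

Lemma G_fragile : fragile G.
Proof.
move=> [S [f [sub_f /(k_connected_induced sub_f) conn]]].
have [_ G_irr] := G_simple.
have side_closed x y : [&& x \notin separator, y \notin separator & G x y] ==>
                       ((x \in side) == (y \in side)).
  by move: x y; apply: forall2_enum; rewrite -ordsE; vm_compute.
apply: (not_k_connected_of_separation G_irr (A := side) (C := separator) _ _ _ _ conn).
- by [].
- move=> x y xC yC Gxy; apply: (eqP (implyP (side_closed x y) _)).
  by rewrite Gxy andbT; apply/andP.
- by rewrite -ordsE; vm_compute.
by rewrite -ordsE; vm_compute.
Qed.

Theorem mainTheorem7 :
  exists (n : nat) (e : rel 'I_n),
    simple_graph e /\ fragile e /\ ~ has_C4 e /\ chromatic_number_is e 4.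
Proof.
exists 19, G; split; first exact: G_simple.
split; first exact: G_fragile.
split; first exact: G_no_C4.
split; first exact: G_colorable4.
by move=> j lt_j4 colj; apply: G_not_colorable3; apply: colorable_widen colj.
Qed.
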